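(* Let $V'$ be a $\mathbb{Z}$-graded vertex algebra and let $V$ be a $\mathbb{Z}$-graded vertex subalgebra of $V'$ such that $V=C_2(V)$. If $V'$ is completely reducible as a weak $V$-module, then $V'=C_2(V')$; in particular $V'$ is $C_2$-cofinite.
   Context: A $\mathbb{Z}$-graded vertex algebra is a vertex algebra $V=\bigoplus_{n\in\mathbb{Z}}V_n$ with a conformal vector $\omega\in V_2$ whose modes $L(n)$ satisfy the Virasoro relations, $L(0)|_{V_n}=n$, and $Y(L(-1)v,z)=\frac{d}{dz}Y(v,z)$. A vertex subalgebra is a subspace containing $\mathbf{1}$ that is itself a vertex algebra under the restricted operations. Modes: $Y(v,z)=\sum_nv_nz^{-n-1}$. $C_2(V)=\mathrm{Span}_{\mathbb{C}}\{u_{-2}v\mid u,v\in V\}$; $V$ is $C_2$-cofinite if $\dim V/C_2(V)<\infty$. A weak module is completely reducible if it is a direct sum of finitely many irreducible weak modules. *)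

From HB Require Import structures.
From mathcomp Require Import all_boot all_order all_algebra.
Set Implicit Arguments. Unset Strict Implicit. Unset Printing Implicit Defensive.
Import Order.TTheory GRing.Theory Num.Theory.
Local Open Scope ring_scope.

Section VertexAlgebra.
Variable K : numClosedFieldType.
Variable V : lmodType K.

(* Y u n v = u_n v, the modes of the vertex operator Y(u,z) = sum_n u_n z^{-n-1} *)
Definition modeT := V -> int -> V -> V.

Definition gbinom (r : int) (i : nat) : K :=
  (\prod_(j < i) (r%:~R - j%:R)) / (i`!)%:R.

Definition subspace_on (S : V -> Prop) : Prop :=
  S 0 /\ forall (a : K) x y, S x -> S y -> S (a *: x + y).

(* Partial sums (up to M terms) of the two sides of the Borcherds / Jacobi
   identity:  sum_i binom(p,i) (u_{r+i} v)_{p+q-i} w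
            = sum_i (-1)^i binom(r,i) (u_{p+r-i} v_{q+i} w - (-1)^r v_{q+r-i} u_{p+i} w) *)
Definition jacobiL (Y : modeT) (u v w : V) (p q r : int) (M : nat) : V :=
  \sum_(i < M) gbinom p i *: Y (Y u (r + (i : nat)%:Z) v) (p + q - (i : nat)%:Z) w.

Definition jacobiR (Y : modeT) (u v w : V) (p q r : int) (M : nat) : V :=
  \sum_(i < M) ((-1) ^+ (i : nat) * gbinom r i) *:
     (Y u (p + r - (i : nat)%:Z) (Y v (q + (i : nat)%:Z) w)
      - (-1) ^+ (odd `|r|%N) *: Y v (q + r - (i : nat)%:Z) (Y u (p + (i : nat)%:Z) w)).

(* Taking S = (fun _ => True)
   gives a Z-graded vertex algebra on V itself; for a general S this says that S
   is a Z-graded vertex subalgebra (same vacuum, restricted vertex operators,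
   its own conformal vector omega). *)
Record is_ZGVA (S : V -> Prop) (Y : modeT) (one omega : V) (c : K) : Prop := {
  zgva_subspace : subspace_on S;
  zgva_one : S one;
  zgva_omega : S omega;
  zgva_closed : forall u v n, S u -> S v -> S (Y u n v);
  zgva_linl : forall (a : K) u u' n v, S u -> S u' -> S v ->
      Y (a *: u + u') n v = a *: Y u n v + Y u' n v;
  zgva_linr : forall (a : K) u n v v', S u -> S v -> S v' ->
      Y u n (a *: v + v') = a *: Y u n v + Y u n v';
  zgva_trunc : forall u v, S u -> S v ->
      exists N : int, forall n, N <= n -> Y u n v = 0;
  zgva_vac : forall n v, S v -> Y one n v = (if n == -1 then v else 0);
  zgva_create : forall u, S u -> Y u (-1) one = u /\ (forall n, 0 <= n -> Y u n one = 0);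
  zgva_jacobi : forall u v w p q r, S u -> S v -> S w ->
      exists N : nat, forall M, (N <= M)%N -> jacobiL Y u v w p q r M = jacobiR Y u v w p q r M;
  (* L(n) = omega_{n+1} : Virasoro relations with central charge c *)
  zgva_vir : forall (m n : int) v, S v ->
      Y omega (m + 1) (Y omega (n + 1) v) - Y omega (n + 1) (Y omega (m + 1) v)
      = (m - n)%:~R *: Y omega (m + n + 1) v
        + (if m + n == 0 then ((m ^+ 3 - m)%:~R / 12%:R) * c else 0) *: v;
  (* omega in V_2, i.e. L(0) omega = 2 omega *)
  zgva_omega_wt : Y omega 1 omega = 2%:R *: omega;
  (* V = (+)_{n in Z} V_n with V_n = { v | L(0) v = n v } *)
  zgva_graded : forall v, S v -> exists s : seq (int * V),
      (forall x, x \in s -> S x.2 /\ Y omega 1 x.2 = x.1%:~R *: x.2)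
      /\ v = \sum_(x <- s) x.2;
  (* Y(L(-1)u, z) = d/dz Y(u, z), i.e. (L(-1)u)_n = -n u_{n-1} *)
  zgva_deriv : forall u n w, S u -> S w ->
      Y (Y omega 0 u) n w = - (n%:~R *: Y u (n - 1) w)
}.

Definition C2_span (S : V -> Prop) (Y : modeT) (x : V) : Prop :=
  exists s : seq (K * (V * V)),
    (forall t, t \in s -> S t.2.1 /\ S t.2.2)
    /\ x = \sum_(t <- s) t.1 *: Y t.2.1 (-2) t.2.2.

(* dim S / C_2(S) < infinity *)
Definition C2_cofinite (S : V -> Prop) (Y : modeT) : Prop :=
  exists (n : nat) (b : 'I_n -> V), (forall i, S (b i)) /\
    forall x, S x -> exists (a : 'I_n -> K) (y : V),
      C2_span S Y y /\ x = \sum_(i < n) a i *: b i + y.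

(* weak S-submodule of V (V viewed as a weak S-module via Y restricted to S) *)
Definition weak_submodule (S : V -> Prop) (Y : modeT) (W : V -> Prop) : Prop :=
  subspace_on W /\ forall u n w, S u -> W w -> W (Y u n w).

Definition irreducible_submodule (S : V -> Prop) (Y : modeT) (W : V -> Prop) : Prop :=
  weak_submodule S Y W /\ (exists w, W w /\ w <> 0) /\
  forall W' : V -> Prop, weak_submodule S Y W' -> (forall x, W' x -> W x) ->
    (forall x, W' x -> x = 0) \/ (forall x, W x -> W' x).

Definition completely_reducible (S : V -> Prop) (Y : modeT) : Prop :=
  exists (k : nat) (W : 'I_k -> V -> Prop),
    (forall i, irreducible_submodule S Y (W i)) /\
    (forall x, exists w : 'I_k -> V, (forall i, W i (w i)) /\ x = \sum_(i < k) w i) /\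
    (forall w : 'I_k -> V, (forall i, W i (w i)) -> \sum_(i < k) w i = 0 ->
       forall i, w i = 0).

End VertexAlgebra.

From mathcomp Require Import all_boot all_order all_algebra zify.
Set Implicit Arguments. Unset Strict Implicit. Unset Printing Implicit Defensive.
Import GRing.Theory.
Local Open Scope ring_scope.

(* C_2(V') is a subspace containing every u_{-2} v; by the derivative
      property (L(-1)u)_n = -n u_{n-1} it also contains every u_{-n} v, n >= 2.
   2. The Jacobi identity with (p, q, r) = (0, -1, -2) expresses (a_{-2} b)_{-1} x
      as a combination of modes a_{-2-i} b_{-1+i} x and b_{-3-i} a_i x, all of the
      form u_{-n} v with n >= 2, so (a_{-2} b)_{-1} x lies in C_2(V').
   3. Writing 1 = sum_j c_j a_j_{-2} b_j and using x = 1_{-1} x, every x is in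
      C_2(V'); hence V' = C_2(V') and dim V'/C_2(V') = 0. *)

Section C2Span.
Variables (K : numClosedFieldType) (V : lmodType K) (Y : modeT V).
Variable S : V -> Prop.

Lemma C2_span0 : C2_span S Y 0.
Proof. by exists [::]; split => //; rewrite big_nil. Qed.

Lemma C2_spanD x y : C2_span S Y x -> C2_span S Y y -> C2_span S Y (x + y).
Proof.
move=> [s1 [Hs1 ->]] [s2 [Hs2 ->]]; exists (s1 ++ s2); split; last by rewrite big_cat.
by move=> t; rewrite mem_cat => /orP[/Hs1 | /Hs2].
Qed.

Lemma C2_spanZ (a : K) x : C2_span S Y x -> C2_span S Y (a *: x).
Proof.
move=> [s [Hs ->]]; exists [seq (a * t.1, t.2) | t <- s]; split.
  by move=> t /mapP[t' /Hs Ht' ->].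
by rewrite big_map scaler_sumr; apply: eq_bigr => t _; rewrite scalerA.
Qed.

Lemma C2_spanB x y : C2_span S Y x -> C2_span S Y y -> C2_span S Y (x - y).
Proof. by move=> Hx Hy; rewrite -scaleN1r; apply/C2_spanD/C2_spanZ. Qed.

Lemma C2_span_sum n (F : 'I_n -> V) :
  (forall i, C2_span S Y (F i)) -> C2_span S Y (\sum_(i < n) F i).
Proof. by move=> HF; apply: big_ind => //; [exact: C2_span0 | exact: C2_spanD]. Qed.

Lemma C2_span_gen u v : S u -> S v -> C2_span S Y (Y u (-2) v).
Proof.
move=> Su Sv; exists [:: (1, (u, v))]; rewrite big_seq1 scale1r.
by split=> // t; rewrite inE => /eqP ->.
Qed.

Lemma C2_span_full x : C2_span S Y x -> C2_span (fun _ => True) Y x.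
Proof. by move=> [s [_ ->]]; exists s. Qed.

End C2Span.

Lemma gbinom00 (K : numClosedFieldType) : gbinom K 0 0 = 1.
Proof. by rewrite /gbinom big_ord0 fact0 mul1r invr1. Qed.

Lemma gbinom0S (K : numClosedFieldType) (i : nat) : gbinom K 0 i.+1 = 0.
Proof. by rewrite /gbinom big_ord_recl /= subr0 mulr0z !mul0r. Qed.

Section VertexAlgebraC2.
Variables (K : numClosedFieldType) (V : lmodType K).
Variables (Y : modeT V) (one omega : V) (c : K).
Hypothesis HV : is_ZGVA (fun _ => True) Y one omega c.

Local Notation C2 := (C2_span (fun _ : V => True) Y).

Lemma mode_zero n x : Y 0 n x = 0.
Proof.
have := zgva_linl HV (-1) n I I I (u := 0) (u' := 0) (v := x).
by rewrite scaler0 addr0 scaleN1r addNr.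
Qed.

(* Every mode u_{-2-n} v lies in C_2(V): (L(-1)u)_m = -m u_{m-1} with m <> 0
   lowers the mode index one step at a time. *)
Lemma C2_negative_mode (n : nat) u v : C2 (Y u (-2 - n%:Z) v).
Proof.
elim: n u => [|n IH] u; first by rewrite subr0; apply: C2_span_gen.
have Hderiv := zgva_deriv HV (-2 - n%:Z) I I (u := u) (w := v).
have shift : -2 - n%:Z - 1 = -2 - n.+1%:Z by lia.
rewrite shift in Hderiv.
have m_neq0 : - (-2 - n%:Z)%:~R != 0 :> K.
  by rewrite oppr_eq0 intr_eq0 -opprD oppr_eq0 -PoszD.
have -> : Y u (-2 - n.+1%:Z) v
    = (- (-2 - n%:Z)%:~R)^-1 *: Y (Y omega 0 u) (-2 - n%:Z) v.
  by rewrite Hderiv -scaleNr scalerA mulVf ?scale1r.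
exact/C2_spanZ/IH.
Qed.

Lemma C2_minus1_of_minus2 a b x : C2 (Y (Y a (-2) b) (-1) x).
Proof.
have [N HN] := zgva_jacobi HV 0 (-1) (-2) I I I (u := a) (v := b) (w := x).
have := HN N.+1 (leqnSn N).
rewrite /jacobiL big_ord_recl big1 => [|i _]; last by rewrite gbinom0S scale0r.
rewrite gbinom00 scale1r addr0 /= addr0 subr0 add0r => ->.
apply: C2_span_sum => i; apply/C2_spanZ/C2_spanB.
  by rewrite add0r; apply: C2_negative_mode.
apply/C2_spanZ; have -> : -1 + -2 - i%:Z = -2 - i.+1%:Z by lia.
exact: C2_negative_mode.
Qed.

(* If the vacuum lies in C_2(V), then so does every x = 1_{-1} x. *)
Lemma C2_everything_of_vacuum : C2 one -> forall x, C2 x.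
Proof.
move=> [s [_ Hone]] x; have := zgva_vac HV (-1) (v := x) I; rewrite eqxx => <-.
rewrite Hone; elim: s {Hone} => [|t s IH].
  by rewrite big_nil mode_zero; apply: C2_span0.
rewrite big_cons (zgva_linl HV) //; apply: C2_spanD => //.
exact/C2_spanZ/C2_minus1_of_minus2.
Qed.

Lemma C2_cofinite_of_C2 : (forall x, C2 x) -> C2_cofinite (fun _ => True) Y.
Proof.
move=> HC2; exists 0%N, (fun _ => 0); split => // x _.
by exists (fun _ => 0), x; rewrite big_ord0 add0r.
Qed.

End VertexAlgebraC2.

Theorem proposition2p15 (K : numClosedFieldType) (V' : lmodType K)
  (Y : modeT V') (one omega' : V') (c' : K)
  (HV' : is_ZGVA (fun _ => True) Y one omega' c')
  (V : V' -> Prop) (omega : V') (c : K)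
  (HV : is_ZGVA V Y one omega c)
  (HC2 : forall x, V x -> C2_span V Y x)
  (Hcr : completely_reducible V Y) :
  (forall x : V', C2_span (fun _ => True) Y x) /\ C2_cofinite (fun _ => True) Y.
Proof.
have one_in_C2 : C2_span (fun _ => True) Y one.
  exact/C2_span_full/HC2/(zgva_one HV).
have V'_eq_C2 := C2_everything_of_vacuum HV' one_in_C2.
by split; [exact: V'_eq_C2 | exact: C2_cofinite_of_C2 V'_eq_C2].
Qed.
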